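(* Let $C^*,C_1,C_2>0$. Let $\underline{\boldsymbol m}_h^{(1)},\underline{\boldsymbol m}_h^{(2)}\in\boldsymbol X$ with $|\underline{\boldsymbol m}_h^{(q)}|=1$ pointwise and $\|\underline{\boldsymbol m}_h^{(q)}\|_\infty+\|\nabla_h\underline{\boldsymbol m}_h^{(q)}\|_\infty\le C^*$, $q=1,2$. Let $\tilde{\boldsymbol m}_h^{(1)},\tilde{\boldsymbol m}_h^{(2)}\in\boldsymbol X$, set $\boldsymbol m_h^{(q)}=\tilde{\boldsymbol m}_h^{(q)}/|\tilde{\boldsymbol m}_h^{(q)}|$, $\boldsymbol e_h^{(q)}=\underline{\boldsymbol m}_h^{(q)}-\boldsymbol m_h^{(q)}$, $\tilde{\boldsymbol e}_h^{(q)}=\underline{\boldsymbol m}_h^{(q)}-\tilde{\boldsymbol m}_h^{(q)}$. Suppose $C_1h\le k\le C_2h$, $$\|\tilde{\boldsymbol e}_h^{(q)}\|_2\le2k^{15/8},\quad\|\nabla_h\tilde{\boldsymbol e}_h^{(q)}\|_2\le\tfrac12k^{11/8}\ (q=1,2),\qquad\|\underline{\boldsymbol m}_h^{(1)}-\underline{\boldsymbol m}_h^{(2)}\|_\infty\le\tfrac14k^{7/8}.$$ Then, for $k$ and $h$ sufficiently small, $$\big|\langle\tilde{\boldsymbol e}_h^{(1)}-\boldsymbol e_h^{(1)},\boldsymbol e_h^{(2)}\rangle\big|\le k^{5/4}\|\boldsymbol e_h^{(2)}\|_2^2+k^{1/4}\|\tilde{\boldsymbol e}_h^{(1)}-\boldsymbol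 e_h^{(1)}\|_2^2.$$
   Context: $\Omega=[0,1]^3$, $h=1/N$, cell-centered grid points $((i-\tfrac12)h,(j-\tfrac12)h,(\ell-\tfrac12)h)$, $0\le i,j,\ell\le N+1$, interior points $\Omega_h^0$ those with $1\le i,j,\ell\le N$. $\boldsymbol X$ is the space of $\mathbb R^3$-valued grid functions satisfying the discrete Neumann condition $\boldsymbol m_{0,j,\ell}=\boldsymbol m_{1,j,\ell}$, $\boldsymbol m_{N+1,j,\ell}=\boldsymbol m_{N,j,\ell}$ (and analogously in $j,\ell$). Forward differences $D_xf_{i,j,\ell}=(f_{i+1,j,\ell}-f_{i,j,\ell})/h$ (similarly $D_y,D_z$); $\nabla_h$ collects all forward differences. $\langle\boldsymbol f,\boldsymbol g\rangle=h^3\sum_{\Omega_h^0}\boldsymbol f\cdot\boldsymbol g$, $\|\boldsymbol f\|_2=\langle\boldsymbol f,\boldsymbol f\rangle^{1/2}$, $\|\boldsymbol f\|_\infty=\max_{\Omega_h^0}|\boldsymbol f|$, and $\|\nabla_h\boldsymbol f\|_2,\|\nabla_h\boldsymbol f\|_\infty$ are the analogous discrete norms of the difference quotients. *)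

From HB Require Import structures.
From mathcomp Require Import all_boot all_order all_algebra.
From mathcomp Require Import all_classical all_reals.
From mathcomp Require Import exp.
Set Implicit Arguments. Unset Strict Implicit. Unset Printing Implicit Defensive.
Import Order.TTheory GRing.Theory Num.Theory.
Local Open Scope ring_scope.

Section Grid.
Variable R : realType.

(* A grid function on the cell-centred grid; only indices 0..N+1 are used. *)
Definition gridfun := nat -> nat -> nat -> 'rV[R]_3.

Definition vdot (u v : 'rV[R]_3) : R := \sum_(c < 3) u 0 c * v 0 c.
Definition vnorm (u : 'rV[R]_3) : R := Num.sqrt (vdot u u).

(* discrete Neumann condition: membership in the space X *)
Definition inX (N : nat) (f : gridfun) : Prop :=
  forall a b, (a <= N.+1)%N -> (b <= N.+1)%N ->
    (f O a b = f (S O) a b /\ f N.+1 a b = f N a b) /\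
    (f a O b = f a (S O) b /\ f a N.+1 b = f a N b) /\
    (f a b O = f a b (S O) /\ f a b N.+1 = f a b N).

Definition unit_length (N : nat) (f : gridfun) : Prop :=
  forall i j l, (i <= N.+1)%N -> (j <= N.+1)%N -> (l <= N.+1)%N ->
    vnorm (f i j l) = 1.

Definition meshh (N : nat) : R := (N%:R)^-1.

Definition isum (N : nat) (F : nat -> nat -> nat -> R) : R :=
  \sum_(1 <= i < N.+1) \sum_(1 <= j < N.+1) \sum_(1 <= l < N.+1) F i j l.
Definition imax (N : nat) (F : nat -> nat -> nat -> R) : R :=
  \big[Num.max/0]_(1 <= i < N.+1) \big[Num.max/0]_(1 <= j < N.+1)
     \big[Num.max/0]_(1 <= l < N.+1) F i j l.

Definition gdot (N : nat) (f g : gridfun) : R :=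
  meshh N ^+ 3 * isum N (fun i j l => vdot (f i j l) (g i j l)).
Definition norm2 (N : nat) (f : gridfun) : R := Num.sqrt (gdot N f f).
Definition normInf (N : nat) (f : gridfun) : R :=
  imax N (fun i j l => vnorm (f i j l)).

Definition Dx (N : nat) (f : gridfun) : gridfun :=
  fun i j l => (meshh N)^-1 *: (f i.+1 j l - f i j l).
Definition Dy (N : nat) (f : gridfun) : gridfun :=
  fun i j l => (meshh N)^-1 *: (f i j.+1 l - f i j l).
Definition Dz (N : nat) (f : gridfun) : gridfun :=
  fun i j l => (meshh N)^-1 *: (f i j l.+1 - f i j l).

Definition gradsq (N : nat) (f : gridfun) (i j l : nat) : R :=
  vdot (Dx N f i j l) (Dx N f i j l) + vdot (Dy N f i j l) (Dy N f i j l)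
  + vdot (Dz N f i j l) (Dz N f i j l).
Definition gnorm2 (N : nat) (f : gridfun) : R :=
  Num.sqrt (meshh N ^+ 3 * isum N (gradsq N f)).
Definition gnormInf (N : nat) (f : gridfun) : R :=
  imax N (fun i j l => Num.sqrt (gradsq N f i j l)).

Definition gsub (f g : gridfun) : gridfun := fun i j l => f i j l - g i j l.
Definition normalize (f : gridfun) : gridfun :=
  fun i j l => (vnorm (f i j l))^-1 *: f i j l.

End Grid.

From HB Require Import structures.
From mathcomp Require Import all_boot all_order all_algebra.
From mathcomp Require Import all_classical all_reals.
From mathcomp Require Import exp.
From mathcomp Require Import ring lra.
Import Order.TTheory GRing.Theory Num.Theory.
Local Open Scope ring_scope.
Set Implicit Arguments. Unset Strict Implicit. Unset Printing Implicit Defensive.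

(* Pointwise, [te1 - e1 = m1 - mt1 = (1 - |mt1|) m1] is parallel to the unit vector
   [m1 = mt1 / |mt1|], while for unit vectors [m2 . (mu2 - m2) = - |e2|^2 / 2].  Hence
   [|<m1 - mt1, e2>| <= |1 - |mt1|| (|e2| / 2 + |m1 - m2|) |e2|], and Young's inequality
   gives the claim as soon as [|mu - mt|], [|mu - m|] and [|m1 - m2|] are [O(k^(3/4))]
   pointwise.  These bounds follow from the discrete Sobolev inequality
   [||f||_oo <= h^(-1/2) (||f||_2 + 8 ||grad_h f||_2)] applied to [mu - mt], which with
   [k <= C2 h] gives [O(k^(7/8))].  The Sobolev inequality is a discrete L^6 embedding
   followed by the inverse estimate [|f(x)|^6 <= sum |f|^6]: on each grid line [|f|^4] is
   at most its mean plus its total variation, and the Loomis-Whitney inequality combines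
   the three directions into [sum |f|^6 <= (sum |f|^6)^(3/4) D^(3/2)]. *)

Lemma ler_of_sqr (R : realDomainType) (x y : R) : 0 <= y -> x ^+ 2 <= y ^+ 2 -> x <= y.
Proof. by move=> y0 h; nra. Qed.

Lemma young_weighted (R : realFieldType) (a b c x y : R) :
  0 <= a -> 0 <= b -> 0 <= x -> 0 <= y -> c ^+ 2 <= 4 * a * b ->
  c * x * y <= a * x ^+ 2 + b * y ^+ 2.
Proof.
move=> a0 b0 x0 y0 cab.
have [a_eq0|a_gt0] := eqVneq a 0.
  have c0 : c ^+ 2 <= 0 by rewrite a_eq0 mulr0 mul0r in cab.
  rewrite a_eq0.
  have -> : c = 0 by apply/eqP; rewrite -sqrf_eq0 eq_le c0 sqr_ge0.
  by rewrite !mul0r add0r mulr_ge0 // sqr_ge0.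
have a_pos : 0 < a by rewrite lt_def a_gt0.
have key : 0 <= (2 * a * x - c * y) ^+ 2 + (4 * a * b - c ^+ 2) * y ^+ 2.
  by rewrite addr_ge0 ?sqr_ge0 // mulr_ge0 ?sqr_ge0 // subr_ge0.
rewrite -(@ler_pM2l _ (4 * a)) ?mulr_gt0 //; nra.
Qed.

Section Vectors.
Variable R : realType.
Implicit Types (u v w : 'rV[R]_3) (c : R).

Lemma vdotE u v : vdot u v = u 0 0 * v 0 0 + u 0 1 * v 0 1 + u 0 2%:R * v 0 2%:R.
Proof.
rewrite /vdot !big_ord_recr big_ord0 /= add0r.
by congr (_ + _ + _); congr (_ * _); congr (_ _ _); apply/val_inj.
Qed.

Lemma vdotC u v : vdot u v = vdot v u.
Proof. by rewrite !vdotE; ring. Qed.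

Lemma vdotDl u v w : vdot (u + v) w = vdot u w + vdot v w.
Proof. by rewrite !vdotE !mxE; ring. Qed.

Lemma vdotBl u v w : vdot (u - v) w = vdot u w - vdot v w.
Proof. by rewrite !vdotE !mxE; ring. Qed.

Lemma vdotZl c u w : vdot (c *: u) w = c * vdot u w.
Proof. by rewrite !vdotE !mxE; ring. Qed.

Lemma vdotDr u v w : vdot w (u + v) = vdot w u + vdot w v.
Proof. by rewrite vdotC vdotDl !(vdotC w). Qed.

Lemma vdotBr u v w : vdot w (u - v) = vdot w u - vdot w v.
Proof. by rewrite vdotC vdotBl !(vdotC w). Qed.

Lemma vdotZr c u w : vdot w (c *: u) = c * vdot w u.
Proof. by rewrite vdotC vdotZl vdotC. Qed.

Lemma vdot_ge0 u : 0 <= vdot u u.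
Proof. by rewrite vdotE; nra. Qed.

Lemma vdot_sqr_le u v : vdot u v ^+ 2 <= vdot u u * vdot v v.
Proof.
rewrite !vdotE.
set a := u 0 0; set b := u 0 1; set c := u 0 2%:R.
set x := v 0 0; set y := v 0 1; set z := v 0 2%:R.
have : 0 <= (a * y - b * x) ^+ 2 + (a * z - c * x) ^+ 2 + (b * z - c * y) ^+ 2.
  by rewrite !addr_ge0 // sqr_ge0.
by move=> h; nra.
Qed.

Lemma vnorm_ge0 u : 0 <= vnorm u.
Proof. exact: sqrtr_ge0. Qed.

Lemma sqr_vnorm u : vnorm u ^+ 2 = vdot u u.
Proof. by rewrite /vnorm sqr_sqrtr // vdot_ge0. Qed.

Lemma normr_vdot_le u v : `|vdot u v| <= vnorm u * vnorm v.
Proof.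
apply: ler_of_sqr; first by rewrite mulr_ge0 // vnorm_ge0.
by rewrite real_normK ?num_real // exprMn !sqr_vnorm vdot_sqr_le.
Qed.

Lemma vnormD_le u v : vnorm (u + v) <= vnorm u + vnorm v.
Proof.
apply: ler_of_sqr; first by rewrite addr_ge0 // vnorm_ge0.
rewrite sqr_vnorm vdotDl !vdotDr (vdotC v u) sqrrD !sqr_vnorm.
have := le_trans (ler_norm (vdot u v)) (normr_vdot_le u v); lra.
Qed.

Lemma vnormZ c u : vnorm (c *: u) = `|c| * vnorm u.
Proof.
by rewrite /vnorm vdotZl vdotZr mulrA -expr2 sqrtrM ?sqr_ge0 // sqrtr_sqr.
Qed.

Lemma vnorm_distC u v : vnorm (u - v) = vnorm (v - u).
Proof. by rewrite -opprB -scaleN1r vnormZ normrN normr1 mul1r. Qed.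

Lemma vnorm_dist_dist u v : `|vnorm u - vnorm v| <= vnorm (u - v).
Proof.
have := vnormD_le (u - v) v; have := vnormD_le (v - u) u.
rewrite !subrK vnorm_distC ler_norml; lra.
Qed.

End Vectors.

Definition vnormalize (R : realType) (t : 'rV[R]_3) : 'rV[R]_3 := (vnorm t)^-1 *: t.

Section Normalization.
Variable R : realType.
Implicit Types (u v t m : 'rV[R]_3) (d : R).

Lemma vnorm_vnormalize t : 0 < vnorm t -> vnorm (vnormalize t) = 1.
Proof. by move=> t0; rewrite vnormZ gtr0_norm ?invr_gt0 // mulVf // gt_eqF. Qed.

Lemma vnormalize_subr t : 0 < vnorm t -> t - vnormalize t = (vnorm t - 1) *: vnormalize t.
Proof. by move=> t0; rewrite scalerBl scalerA mulfV ?gt_eqF // !scale1r. Qed.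

Lemma vnorm_near_unit u t d : vnorm u = 1 -> vnorm (u - t) <= d -> `|vnorm t - 1| <= d.
Proof. by move=> u1; apply: le_trans; rewrite -u1 vnorm_distC vnorm_dist_dist. Qed.

Lemma vnorm_sub_vnormalize_le u t d :
  vnorm u = 1 -> vnorm (u - t) <= d -> d < 1 -> vnorm (u - vnormalize t) <= 2 * d.
Proof.
move=> u1 ut d1; have t1 := vnorm_near_unit u1 ut.
have t0 : 0 < vnorm t by move: t1; rewrite ler_norml; lra.
rewrite -(subrK t u) -addrA vnormalize_subr //.
apply: le_trans (vnormD_le _ _) _.
by rewrite vnormZ vnorm_vnormalize // mulr1; lra.
Qed.

Lemma vdot_unit_subr m v :
  vnorm m = 1 -> vnorm v = 1 -> vdot m (v - m) = - vdot (v - m) (v - m) / 2.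
Proof.
move=> m1 v1; have := sqr_vnorm m; have := sqr_vnorm v.
rewrite m1 v1 expr1n => vv mm.
by rewrite !vdotBl !vdotBr -vv -mm (vdotC v m); field.
Qed.

Lemma normr_vdot_unit_subr_le m1 m2 v :
  vnorm m1 = 1 -> vnorm m2 = 1 -> vnorm v = 1 ->
  `|vdot m1 (v - m2)| <= (vnorm (v - m2) / 2 + vnorm (m1 - m2)) * vnorm (v - m2).
Proof.
move=> m1u m2u vu; set e := v - m2.
have -> : vdot m1 e = vdot m2 e + vdot (m1 - m2) e by rewrite vdotBl addrC subrK.
rewrite vdot_unit_subr // -sqr_vnorm.
apply: le_trans (ler_normD _ _) _.
rewrite normrM normrN normfV ger0_norm ?sqr_ge0 // gtr0_norm // expr2.
have := normr_vdot_le (m1 - m2) e; lra.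
Qed.

(* The defect [m - t] of the normalization [m] of [t] is parallel to [m], and
   [m . (v - m')] is of size [(|v - m'| + |m - m'|) |v - m'|]; Young's inequality
   then splits the product. *)
Lemma vdot_normalization_defect_le u v t s d (a b delta : R) :
  vnorm u = 1 -> vnorm v = 1 -> vnorm (u - t) <= d -> vnorm (v - s) <= d -> d < 1 ->
  vnorm (u - v) <= delta -> 0 <= a -> 0 <= b -> (5 * d + delta) ^+ 2 <= 4 * a * b ->
  `|vdot (vnormalize t - t) (v - vnormalize s)|
    <= a * vdot (v - vnormalize s) (v - vnormalize s)
       + b * vdot (vnormalize t - t) (vnormalize t - t).
Proof.
move=> u1 v1 ut vs d1 uv a0 b0 hab.
have t0 : 0 < vnorm t by move: (vnorm_near_unit u1 ut); rewrite ler_norml; lra.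
have s0 : 0 < vnorm s by move: (vnorm_near_unit v1 vs); rewrite ler_norml; lra.
set m1 := vnormalize t; set m2 := vnormalize s; set e := v - m2.
set lam := 1 - vnorm t.
have m1u : vnorm m1 = 1 by apply: vnorm_vnormalize.
have m2u : vnorm m2 = 1 by apply: vnorm_vnormalize.
have defect : m1 - t = lam *: m1 by rewrite -opprB vnormalize_subr // -scaleNr opprB.
have lam_le : `|lam| <= d by rewrite distrC; apply: vnorm_near_unit ut.
have e_le : vnorm e <= 2 * d by exact: vnorm_sub_vnormalize_le v1 vs d1.
have m12_le : vnorm (m1 - m2) <= 4 * d + delta.
  have -> : m1 - m2 = (m1 - u) + (u - v) + e by rewrite /e !subrKA.
  have := vnormD_le (m1 - u + (u - v)) e; have := vnormD_le (m1 - u) (u - v).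
  have := vnorm_sub_vnormalize_le u1 ut d1; rewrite vnorm_distC; lra.
have m1e_le : `|vdot m1 e| <= (5 * d + delta) * vnorm e.
  apply: le_trans (normr_vdot_unit_subr_le m1u m2u v1) _.
  by apply: ler_wpM2r; [exact: vnorm_ge0 | lra].
have m1m1 : vdot m1 m1 = 1 by rewrite -sqr_vnorm m1u expr1n.
rewrite defect (vdotZl lam m1) (vdotZl lam m1) (vdotZr lam m1) m1m1 mulr1.
rewrite -sqr_vnorm normrM -expr2 -(real_normK (num_real lam)).
have := young_weighted a0 b0 (vnorm_ge0 e) (normr_ge0 lam) hab.
have := ler_wpM2l (normr_ge0 lam) m1e_le; lra.
Qed.

End Normalization.

Section RealSums.
Variable R : realType.

Lemma ler_sum_nat_widen (F : nat -> R) a b a' b' :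
  (a' <= a)%N -> (b <= b')%N -> (forall i, 0 <= F i) ->
  \sum_(a <= i < b) F i <= \sum_(a' <= i < b') F i.
Proof.
move=> a'a bb' F0; have [ab|ba] := leqP a b; last first.
  by rewrite big_geq ?(ltnW ba) // sumr_ge0.
rewrite (big_cat_nat a'a (leq_trans ab bb')) /= (big_cat_nat ab bb') /= addrCA lerDl.
by rewrite addr_ge0 // sumr_ge0.
Qed.

Lemma ler_sum_nat_term (F : nat -> R) a b i : (a <= i < b)%N -> (forall j, 0 <= F j) ->
  F i <= \sum_(a <= j < b) F j.
Proof.
by case/andP=> ai ib F0; have := @ler_sum_nat_widen F i i.+1 a b ai ib F0; rewrite big_nat1.
Qed.

Lemma cauchy_schwarz2 (p q P Q : R) : 0 <= p -> 0 <= q -> 0 <= P -> 0 <= Q ->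
  p * q + P * Q <= Num.sqrt (p ^+ 2 + P ^+ 2) * Num.sqrt (q ^+ 2 + Q ^+ 2).
Proof.
move=> p0 q0 P0 Q0; apply: ler_of_sqr; first by rewrite mulr_ge0 // sqrtr_ge0.
rewrite exprMn !sqr_sqrtr ?addr_ge0 ?sqr_ge0 //.
have : 0 <= (p * Q - P * q) ^+ 2 by apply: sqr_ge0.
by move=> h; nra.
Qed.

Lemma cauchy_schwarz_sqrt (I : Type) (r : seq I) (a F G : I -> R) :
  (forall i, 0 <= F i) -> (forall i, 0 <= G i) ->
  (forall i, a i <= Num.sqrt (F i) * Num.sqrt (G i)) ->
  \sum_(i <- r) a i <= Num.sqrt (\sum_(i <- r) F i) * Num.sqrt (\sum_(i <- r) G i).
Proof.
move=> F0 G0 aFG; elim: r => [|x r IH]; first by rewrite !big_nil sqrtr0 mulr0.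
rewrite !big_cons; apply: le_trans (lerD (aFG x) IH) _.
have SF0 : 0 <= \sum_(i <- r) F i by apply: sumr_ge0.
have SG0 : 0 <= \sum_(i <- r) G i by apply: sumr_ge0.
have := cauchy_schwarz2 (sqrtr_ge0 (F x)) (sqrtr_ge0 (G x)) (sqrtr_ge0 (\sum_(i <- r) F i))
  (sqrtr_ge0 (\sum_(i <- r) G i)).
by rewrite !sqr_sqrtr.
Qed.

Lemma cauchy_schwarz_sum (I : Type) (r : seq I) (f g : I -> R) :
  (forall i, 0 <= f i) -> (forall i, 0 <= g i) ->
  \sum_(i <- r) f i * g i
    <= Num.sqrt (\sum_(i <- r) f i ^+ 2) * Num.sqrt (\sum_(i <- r) g i ^+ 2).
Proof.
move=> f0 g0; apply: cauchy_schwarz_sqrt => i; rewrite ?sqr_ge0 //.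
by rewrite !sqrtr_sqr !ger0_norm.
Qed.

Lemma sum_sqr_sqrt (I : Type) (r : seq I) (F : I -> R) :
  (forall i, 0 <= F i) -> \sum_(i <- r) Num.sqrt (F i) ^+ 2 = \sum_(i <- r) F i.
Proof. by move=> F0; apply: eq_bigr => i _; rewrite sqr_sqrtr. Qed.

Lemma loomis_whitney_sum (I : Type) (s : seq I) (al be ga : I -> I -> R) :
  (forall y z, 0 <= al y z) -> (forall x z, 0 <= be x z) -> (forall x y, 0 <= ga x y) ->
  \sum_(x <- s) \sum_(y <- s) \sum_(z <- s) al y z * be x z * ga x y
  <= Num.sqrt (\sum_(y <- s) \sum_(z <- s) al y z ^+ 2)
     * Num.sqrt (\sum_(x <- s) \sum_(z <- s) be x z ^+ 2)
     * Num.sqrt (\sum_(x <- s) \sum_(y <- s) ga x y ^+ 2).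
Proof.
move=> al0 be0 ga0.
pose A y := \sum_(z <- s) al y z ^+ 2.
pose B x := \sum_(z <- s) be x z ^+ 2.
pose C x := \sum_(y <- s) ga x y ^+ 2.
have A0 y : 0 <= A y by apply: sumr_ge0 => *; apply: sqr_ge0.
have B0 x : 0 <= B x by apply: sumr_ge0 => *; apply: sqr_ge0.
have C0 x : 0 <= C x by apply: sumr_ge0 => *; apply: sqr_ge0.
have sum_z x y : \sum_(z <- s) al y z * be x z * ga x y
    <= ga x y * Num.sqrt (A y) * Num.sqrt (B x).
  rewrite -mulr_suml mulrC -mulrA; apply: ler_wpM2l => //.
  exact: cauchy_schwarz_sum.
have sum_yz x : \sum_(y <- s) \sum_(z <- s) al y z * be x z * ga x y
    <= Num.sqrt (B x) * (Num.sqrt (C x) * Num.sqrt (\sum_(y <- s) A y)).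
  apply: le_trans (ler_sum _ (fun y _ => sum_z x y)) _.
  rewrite -mulr_suml mulrC; apply: ler_wpM2l; first exact: sqrtr_ge0.
  rewrite -(sum_sqr_sqrt _ A0).
  exact: cauchy_schwarz_sum (fun y => ga0 x y) (fun y => sqrtr_ge0 (A y)).
apply: le_trans (ler_sum _ (fun x _ => sum_yz x)) _.
under eq_bigr do rewrite mulrA.
rewrite -mulr_suml mulrC -!mulrA; apply: ler_wpM2l; first exact: sqrtr_ge0.
rewrite -(sum_sqr_sqrt _ B0) -(sum_sqr_sqrt _ C0).
exact: cauchy_schwarz_sum (fun x => sqrtr_ge0 (B x)) (fun x => sqrtr_ge0 (C x)).
Qed.

Lemma le_mean_add_variation (N : nat) (g : nat -> R) i : (0 < N)%N -> (1 <= i <= N)%N ->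
  g i <= N%:R^-1 * \sum_(1 <= j < N.+1) g j + 2 * \sum_(1 <= m < N) `|g m.+1 - g m|.
Proof.
move=> N0 iN; set TV := \sum_(1 <= m < N) `|g m.+1 - g m|.
have dist1 j : (1 <= j <= N)%N -> `|g j - g 1%N| <= TV.
  case/andP=> j1 jN; rewrite -(telescope_sumr g j1).
  apply: le_trans (ler_norm_sum _ _ _) _.
  by apply: ler_sum_nat_widen => // m; apply: normr_ge0.
have gij j : (1 <= j < N.+1)%N -> g i <= g j + 2 * TV.
  move=> jN; move: (dist1 i iN) (dist1 j jN); rewrite !ler_norml; lra.
have sumN := ler_sum_nat gij.
rewrite big_split /= !sumr_const_nat subn1 /= -[g i *+ _]mulr_natr in sumN.
rewrite -[_ *+ N]mulr_natr in sumN.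
have N0r : 0 < (N%:R : R) by rewrite ltr0n.
rewrite -(@ler_pM2l _ N%:R) // mulrDr mulVKf ?gt_eqF //; lra.
Qed.

End RealSums.

Section GridSums.
Variable R : realType.
Implicit Types (f phi : gridfun R) (F G : nat -> nat -> nat -> R).

Definition sqrf f x y z : R := vdot (f x y z) (f x y z).

(* The unscaled discrete Dirichlet energy [h^-1 ||grad_h f||_2^2]. *)
Definition dirichlet N f : R :=
  isum N (fun x y z => vdot (f x.+1 y z - f x y z) (f x.+1 y z - f x y z)
                       + vdot (f x y.+1 z - f x y z) (f x y.+1 z - f x y z)
                       + vdot (f x y z.+1 - f x y z) (f x y z.+1 - f x y z)).

Lemma sqrf_ge0 f x y z : 0 <= sqrf f x y z.
Proof. exact: vdot_ge0. Qed.

Lemma sum3_ge0 (A B C : seq nat) F : (forall x y z, 0 <= F x y z) ->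
  0 <= \sum_(x <- A) \sum_(y <- B) \sum_(z <- C) F x y z.
Proof. by move=> F0; do 2 (apply: sumr_ge0 => * ); apply: sumr_ge0 => *. Qed.

Lemma cauchy_schwarz_sqrt3 (A B C : seq nat) (a F G : nat -> nat -> nat -> R) :
  (forall x y z, 0 <= F x y z) -> (forall x y z, 0 <= G x y z) ->
  (forall x y z, a x y z <= Num.sqrt (F x y z) * Num.sqrt (G x y z)) ->
  \sum_(x <- A) \sum_(y <- B) \sum_(z <- C) a x y z
  <= Num.sqrt (\sum_(x <- A) \sum_(y <- B) \sum_(z <- C) F x y z)
     * Num.sqrt (\sum_(x <- A) \sum_(y <- B) \sum_(z <- C) G x y z).
Proof.
move=> F0 G0 aFG.
apply: cauchy_schwarz_sqrt => x; try by apply: sumr_ge0 => y _; apply: sumr_ge0.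
apply: cauchy_schwarz_sqrt => y; try by apply: sumr_ge0.
exact: cauchy_schwarz_sqrt.
Qed.

Lemma isum_le N F G : (forall x y z, F x y z <= G x y z) -> isum N F <= isum N G.
Proof. by move=> FG; do 3 (apply: ler_sum => ? _). Qed.

Lemma isum_rotate N F : isum N (fun a b x => F x a b) = isum N F.
Proof.
by rewrite /isum; under eq_bigr do rewrite exchange_big_nat; rewrite exchange_big_nat.
Qed.

Lemma isum_swap23 N F : isum N (fun a b y => F a y b) = isum N F.
Proof. by rewrite /isum; under eq_bigr do rewrite exchange_big_nat. Qed.

(* Cauchy-Schwarz on [(|u|^2 - |v|^2)(|u|^2 + |v|^2)] with [|u + v|^2 <= 2 (|u|^2 + |v|^2)]. *)
Lemma vdot_sqr_diff_le (u v : 'rV[R]_3) :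
  `|vdot u u ^+ 2 - vdot v v ^+ 2|
    <= vnorm (u - v) * Num.sqrt (8 * (vdot u u ^+ 3 + vdot v v ^+ 3)).
Proof.
set a := vdot u u; set b := vdot v v.
have a0 : 0 <= a by apply: vdot_ge0.
have b0 : 0 <= b by apply: vdot_ge0.
have -> : a ^+ 2 - b ^+ 2 = vdot (u - v) (u + v) * (a + b).
  by rewrite /a /b !vdotE !mxE; ring.
have parallelogram : vdot (u + v) (u + v) + vdot (u - v) (u - v) = 2 * (a + b).
  by rewrite /a /b !vdotE !mxE; ring.
rewrite normrM (ger0_norm (addr_ge0 a0 b0)).
apply: le_trans (ler_wpM2r (addr_ge0 a0 b0) (normr_vdot_le _ _)) _.
rewrite -mulrA; apply: ler_wpM2l; first exact: vnorm_ge0.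
apply: ler_of_sqr; first exact: sqrtr_ge0.
rewrite sqr_sqrtr; last by rewrite mulr_ge0 // addr_ge0 // exprn_ge0.
rewrite exprMn sqr_vnorm mulrC.
have uv_le : vdot (u + v) (u + v) <= 2 * (a + b) by have := vdot_ge0 (u - v); lra.
apply: le_trans (ler_wpM2l (sqr_ge0 (a + b)) uv_le) _.
have : 0 <= 3 * (a + b) * (a - b) ^+ 2 by rewrite mulr_ge0 ?sqr_ge0 // mulr_ge0 // addr_ge0.
have -> : 8 * (a ^+ 3 + b ^+ 3)
    = (a + b) ^+ 2 * (2 * (a + b)) + 2 * (3 * (a + b) * (a - b) ^+ 2) by ring.
lra.
Qed.

Lemma variation_sqrf_le N phi :
  \sum_(1 <= a < N.+1) \sum_(1 <= b < N.+1) \sum_(1 <= x < N)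
     `|sqrf phi x.+1 a b ^+ 2 - sqrf phi x a b ^+ 2|
  <= 4 * Num.sqrt (\sum_(1 <= a < N.+1) \sum_(1 <= b < N.+1) \sum_(1 <= x < N.+1)
                     sqrf phi x a b ^+ 3)
       * Num.sqrt (\sum_(1 <= a < N.+1) \sum_(1 <= b < N.+1) \sum_(1 <= x < N)
                     vdot (phi x.+1 a b - phi x a b) (phi x.+1 a b - phi x a b)).
Proof.
pose w := sqrf phi.
pose G x a b := 8 * (w x.+1 a b ^+ 3 + w x a b ^+ 3).
pose D x a b := vdot (phi x.+1 a b - phi x a b) (phi x.+1 a b - phi x a b).
have D0 x a b : 0 <= D x a b by apply: vdot_ge0.
have G0 x a b : 0 <= G x a b by rewrite mulr_ge0 // addr_ge0 // exprn_ge0 // sqrf_ge0.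
have cs : \sum_(1 <= a < N.+1) \sum_(1 <= b < N.+1) \sum_(1 <= x < N)
      `|w x.+1 a b ^+ 2 - w x a b ^+ 2|
    <= Num.sqrt (\sum_(1 <= a < N.+1) \sum_(1 <= b < N.+1) \sum_(1 <= x < N) D x a b)
     * Num.sqrt (\sum_(1 <= a < N.+1) \sum_(1 <= b < N.+1) \sum_(1 <= x < N) G x a b).
  by apply: cauchy_schwarz_sqrt3 => // x a b; apply: vdot_sqr_diff_le.
have G_le : \sum_(1 <= a < N.+1) \sum_(1 <= b < N.+1) \sum_(1 <= x < N) G x a b
    <= 16 * \sum_(1 <= a < N.+1) \sum_(1 <= b < N.+1) \sum_(1 <= x < N.+1) w x a b ^+ 3.
  rewrite mulr_sumr; apply: ler_sum => a _; rewrite mulr_sumr; apply: ler_sum => b _.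
  have w30 x : 0 <= w x a b ^+ 3 by rewrite exprn_ge0 // sqrf_ge0.
  have shifted : \sum_(1 <= x < N) w x.+1 a b ^+ 3 <= \sum_(1 <= x < N.+1) w x a b ^+ 3.
    have -> : \sum_(1 <= x < N) w x.+1 a b ^+ 3 = \sum_(2 <= x < N.+1) w x a b ^+ 3.
      by rewrite [RHS]big_add1.
    exact: ler_sum_nat_widen.
  have unshifted : \sum_(1 <= x < N) w x a b ^+ 3 <= \sum_(1 <= x < N.+1) w x a b ^+ 3.
    exact: ler_sum_nat_widen.
  rewrite /G -mulr_sumr big_split /=; lra.
apply: le_trans cs _; rewrite mulrC; apply: ler_wpM2r; first exact: sqrtr_ge0.
have -> : 4 = Num.sqrt 16 :> R by rewrite (_ : 16 = 4 ^+ 2) ?sqrtr_sqr ?ger0_norm //; ring.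
rewrite -sqrtrM // ler_sqrt //.
by rewrite mulr_ge0 // sum3_ge0 // => *; rewrite exprn_ge0 // sqrf_ge0.
Qed.

End GridSums.

Section LineBounds.
Variable R : realType.
Implicit Types (f phi : gridfun R).

Definition line_bound N phi a b : R :=
  N%:R^-1 * \sum_(1 <= x < N.+1) sqrf phi x a b ^+ 2
  + 2 * \sum_(1 <= x < N) `|sqrf phi x.+1 a b ^+ 2 - sqrf phi x a b ^+ 2|.

Lemma line_bound_ge0 N phi a b : 0 <= line_bound N phi a b.
Proof.
rewrite addr_ge0 ?mulr_ge0 ?invr_ge0 ?ler0n ?sumr_ge0 // => *.
by rewrite exprn_ge0 // sqrf_ge0.
Qed.

Lemma sqrf_sqr_le_line_bound N phi x a b : (0 < N)%N -> (1 <= x <= N)%N ->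
  sqrf phi x a b ^+ 2 <= line_bound N phi a b.
Proof. exact: (le_mean_add_variation (fun t => sqrf phi t a b ^+ 2)). Qed.

Lemma sum_line_bound_le N phi (P S E : R) :
  isum N (fun a b x => sqrf phi x a b ^+ 3) = P ->
  isum N (fun a b x => sqrf phi x a b) = S ->
  isum N (fun a b x => vdot (phi x.+1 a b - phi x a b) (phi x.+1 a b - phi x a b)) <= E ->
  \sum_(1 <= a < N.+1) \sum_(1 <= b < N.+1) line_bound N phi a b
  <= Num.sqrt P * (Num.sqrt S / N%:R + 8 * Num.sqrt E).
Proof.
move=> <- <- DE.
have w0 x a b : 0 <= sqrf phi x a b by apply: sqrf_ge0.
have sqr_le : isum N (fun a b x => sqrf phi x a b ^+ 2)
  <= Num.sqrt (isum N (fun a b x => sqrf phi x a b ^+ 3))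
     * Num.sqrt (isum N (fun a b x => sqrf phi x a b)).
  apply: cauchy_schwarz_sqrt3 => // [a b x|a b x]; first by rewrite exprn_ge0.
  rewrite -sqrtrM ?exprn_ge0 // -exprSr -[4%N]/(2 * 2)%N exprM.
  by rewrite sqrtr_sqr ger0_norm ?sqr_ge0.
have tv_le := variation_sqrf_le N phi.
have dirichlet_le : \sum_(1 <= a < N.+1) \sum_(1 <= b < N.+1) \sum_(1 <= x < N)
    vdot (phi x.+1 a b - phi x a b) (phi x.+1 a b - phi x a b) <= E.
  apply: le_trans DE; apply: ler_sum => a _; apply: ler_sum => b _.
  by apply: ler_sum_nat_widen => // x; apply: vdot_ge0.
have -> : \sum_(1 <= a < N.+1) \sum_(1 <= b < N.+1) line_bound N phi a b
    = N%:R^-1 * isum N (fun a b x => sqrf phi x a b ^+ 2)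
      + 2 * \sum_(1 <= a < N.+1) \sum_(1 <= b < N.+1) \sum_(1 <= x < N)
              `|sqrf phi x.+1 a b ^+ 2 - sqrf phi x a b ^+ 2|.
  rewrite !mulr_sumr -big_split; apply: eq_bigr => a _.
  by rewrite !mulr_sumr -big_split.
have N0 : 0 <= (N%:R : R)^-1 by rewrite invr_ge0 ler0n.
have E0 : 0 <= E by apply: le_trans DE; apply: sum3_ge0 => *; apply: vdot_ge0.
move: dirichlet_le; rewrite -ler_sqrt //.
move=> /(ler_wpM2l (sqrtr_ge0 (isum N (fun a b x => sqrf phi x a b ^+ 3)))).
have := ler_wpM2l N0 sqr_le; lra.
Qed.

End LineBounds.

Section Sobolev.
Variable R : realType.
Implicit Types (f : gridfun R).

Lemma le_sixth_power_of_self_bound (P D : R) : 0 <= P -> 0 <= D ->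
  P <= Num.sqrt (Num.sqrt P * D) ^+ 3 -> P <= D ^+ 6.
Proof.
move=> P0 D0; set rho := Num.sqrt (Num.sqrt P); set sig := Num.sqrt D.
have rho0 : 0 <= rho := sqrtr_ge0 _.
have sig0 : 0 <= sig := sqrtr_ge0 _.
have eP : P = rho ^+ 4 by rewrite -[4%N]/(2 * 2)%N exprM !sqr_sqrtr // sqrtr_ge0.
have eD : D = sig ^+ 2 by rewrite sqr_sqrtr.
rewrite sqrtrM ?sqrtr_ge0 // -/rho -/sig {1}eP exprMn => self.
have rho_le : rho <= sig ^+ 3.
  have [->|rho_neq0] := eqVneq rho 0; first by rewrite exprn_ge0.
  have rho_gt0 : 0 < rho by rewrite lt_def rho_neq0.
  by rewrite -(@ler_pM2l _ (rho ^+ 3)) ?exprn_gt0 // -exprSr.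
rewrite eP eD -exprM -[(2 * 6)%N]/(3 * 4)%N exprM.
by rewrite ler_pXn2r ?nnegrE ?exprn_ge0.
Qed.

Definition sobolev_bound N f : R :=
  Num.sqrt (isum N (sqrf f)) / N%:R + 8 * Num.sqrt (dirichlet N f).

Lemma sobolev_bound_ge0 N f : 0 <= sobolev_bound N f.
Proof. by rewrite addr_ge0 ?mulr_ge0 ?invr_ge0 ?sqrtr_ge0 ?ler0n. Qed.

Lemma sum_line_bound_x_le N f :
  \sum_(1 <= b < N.+1) \sum_(1 <= c < N.+1) line_bound N f b c
  <= Num.sqrt (isum N (fun x y z => sqrf f x y z ^+ 3)) * sobolev_bound N f.
Proof.
apply: sum_line_bound_le; [exact: isum_rotate | exact: isum_rotate | rewrite isum_rotate].
by apply: isum_le => x y z; rewrite -addrA lerDl addr_ge0 // vdot_ge0.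
Qed.

Lemma sum_line_bound_y_le N f :
  \sum_(1 <= a < N.+1) \sum_(1 <= c < N.+1) line_bound N (fun y x z => f x y z) a c
  <= Num.sqrt (isum N (fun x y z => sqrf f x y z ^+ 3)) * sobolev_bound N f.
Proof.
apply: sum_line_bound_le; [exact: isum_swap23 | exact: isum_swap23 | rewrite isum_swap23].
by apply: isum_le => x y z; rewrite addrAC lerDr addr_ge0 // vdot_ge0.
Qed.

Lemma sum_line_bound_z_le N f :
  \sum_(1 <= a < N.+1) \sum_(1 <= b < N.+1) line_bound N (fun z x y => f x y z) a b
  <= Num.sqrt (isum N (fun x y z => sqrf f x y z ^+ 3)) * sobolev_bound N f.
Proof.
apply: sum_line_bound_le => //.
by apply: isum_le => x y z; rewrite lerDr addr_ge0 // vdot_ge0.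
Qed.

Lemma sum_sqrf_cube_le_line_bounds N f : (0 < N)%N ->
  isum N (fun x y z => sqrf f x y z ^+ 3)
  <= Num.sqrt (\sum_(1 <= b < N.+1) \sum_(1 <= c < N.+1) line_bound N f b c)
     * Num.sqrt (\sum_(1 <= a < N.+1) \sum_(1 <= c < N.+1)
                   line_bound N (fun y x z => f x y z) a c)
     * Num.sqrt (\sum_(1 <= a < N.+1) \sum_(1 <= b < N.+1)
                   line_bound N (fun z x y => f x y z) a b).
Proof.
move=> N0.
pose Gx := line_bound N f; pose Gy := line_bound N (fun y x z => f x y z).
pose Gz := line_bound N (fun z x y => f x y z).
have cube_le a b c : (1 <= a <= N)%N -> (1 <= b <= N)%N -> (1 <= c <= N)%N ->
    sqrf f a b c ^+ 3 <= Num.sqrt (Gx b c) * Num.sqrt (Gy a c) * Num.sqrt (Gz a b).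
  move=> ha hb hc; rewrite /Gx /Gy /Gz.
  apply: ler_of_sqr; first by rewrite !mulr_ge0 // sqrtr_ge0.
  rewrite -exprM -[(3 * 2)%N]/(2 + 2 + 2)%N !exprD !exprMn !sqr_sqrtr ?line_bound_ge0 //.
  have w20 := sqr_ge0 (sqrf f a b c).
  rewrite !ler_pM ?mulr_ge0 ?sqrf_ge0 //.
  - exact (sqrf_sqr_le_line_bound f b c N0 ha).
  - exact (sqrf_sqr_le_line_bound (fun y x z => f x y z) a c N0 hb).
  - exact (sqrf_sqr_le_line_bound (fun z x y => f x y z) a b N0 hc).
have sum_sqr_sqrt2 (G : nat -> nat -> R) : (forall b c, 0 <= G b c) ->
    \sum_(1 <= b < N.+1) \sum_(1 <= c < N.+1) Num.sqrt (G b c) ^+ 2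
    = \sum_(1 <= b < N.+1) \sum_(1 <= c < N.+1) G b c.
  by move=> G0; apply: eq_bigr => b _; apply: sum_sqr_sqrt.
apply: le_trans (_ : isum N (fun a b c =>
  Num.sqrt (Gx b c) * Num.sqrt (Gy a c) * Num.sqrt (Gz a b)) <= _).
  apply: ler_sum_nat => a; rewrite ltnS => ha; apply: ler_sum_nat => b; rewrite ltnS => hb.
  by apply: ler_sum_nat => c; rewrite ltnS => hc; apply: cube_le.
have := loomis_whitney_sum (index_iota 1 N.+1) (fun b c => sqrtr_ge0 (Gx b c))
  (fun a c => sqrtr_ge0 (Gy a c)) (fun a b => sqrtr_ge0 (Gz a b)).
by rewrite !sum_sqr_sqrt2 //; apply: line_bound_ge0.
Qed.

Lemma sum_sqrf_cube_le N f : (0 < N)%N ->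
  isum N (fun x y z => sqrf f x y z ^+ 3) <= sobolev_bound N f ^+ 6.
Proof.
move=> N0; apply: le_sixth_power_of_self_bound.
- by apply: sum3_ge0 => *; rewrite exprn_ge0 // sqrf_ge0.
- exact: sobolev_bound_ge0.
apply: le_trans (sum_sqrf_cube_le_line_bounds f N0) _.
set P := isum N _.
have sqrt_le X : X <= Num.sqrt P * sobolev_bound N f ->
    Num.sqrt X <= Num.sqrt (Num.sqrt P * sobolev_bound N f).
  by rewrite ler_sqrt // mulr_ge0 ?sqrtr_ge0 ?sobolev_bound_ge0.
rewrite !exprS expr0 mulr1 mulrA !ler_pM ?mulr_ge0 ?sqrtr_ge0 //; apply: sqrt_le.
- exact: sum_line_bound_x_le.
- exact: sum_line_bound_y_le.
- exact: sum_line_bound_z_le.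
Qed.

Lemma sqrf_le_sobolev_bound N f x y z : (0 < N)%N ->
  (1 <= x < N.+1)%N -> (1 <= y < N.+1)%N -> (1 <= z < N.+1)%N ->
  sqrf f x y z <= sobolev_bound N f ^+ 2.
Proof.
move=> N0 hx hy hz.
have w30 a b c : 0 <= sqrf f a b c ^+ 3 by rewrite exprn_ge0 // sqrf_ge0.
have cube_le : sqrf f x y z ^+ 3 <= isum N (fun a b c => sqrf f a b c ^+ 3).
  apply: le_trans (ler_sum_nat_term (F := fun c => sqrf f x y c ^+ 3) hz (w30 x y)) _.
  apply: le_trans (ler_sum_nat_term
    (F := fun b => \sum_(1 <= c < N.+1) sqrf f x b c ^+ 3) hy _) _.
    by move=> b; apply: sumr_ge0.
  apply: (ler_sum_nat_term
    (F := fun a => \sum_(1 <= b < N.+1) \sum_(1 <= c < N.+1) sqrf f a b c ^+ 3) hx).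
  by move=> a; apply: sumr_ge0 => b _; apply: sumr_ge0.
rewrite -(@ler_pXn2r _ 3) ?nnegrE ?sqrf_ge0 ?exprn_ge0 ?sobolev_bound_ge0 //.
by rewrite -exprM; apply: le_trans cube_le (sum_sqrf_cube_le f N0).
Qed.

End Sobolev.

Section GridNorms.
Variable R : realType.
Implicit Types (f g : gridfun R).

Lemma meshhE N : meshh R N = N%:R^-1.
Proof. by []. Qed.

Lemma sqr_norm2 N f : norm2 N f ^+ 2 = gdot N f f.
Proof.
rewrite sqr_sqrtr // mulr_ge0 ?exprn_ge0 ?invr_ge0 ?ler0n // sum3_ge0 // => *.
exact: vdot_ge0.
Qed.

Lemma isum_sqrf_norm2 N f : (0 < N)%N ->
  isum N (sqrf f) = (N%:R * Num.sqrt N%:R * norm2 N f) ^+ 2.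
Proof.
move=> N0; rewrite !exprMn sqr_sqrtr ?ler0n // sqr_norm2 /gdot meshhE -exprSr exprVn.
by rewrite mulrA mulfV ?mul1r // expf_neq0 // pnatr_eq0 -lt0n.
Qed.

Lemma dirichlet_gnorm2 N f : (0 < N)%N ->
  dirichlet N f = (Num.sqrt N%:R * gnorm2 N f) ^+ 2.
Proof.
move=> N0; have N0r : (N%:R : R) != 0 by rewrite pnatr_eq0 -lt0n.
rewrite exprMn sqr_sqrtr ?ler0n // /gnorm2 sqr_sqrtr; last first.
  rewrite mulr_ge0 ?exprn_ge0 ?invr_ge0 ?ler0n // sum3_ge0 // => *.
  by rewrite !addr_ge0 ?vdot_ge0.
have -> : isum N (gradsq N f) = N%:R ^+ 2 * dirichlet N f.
  rewrite /dirichlet /isum !mulr_sumr; apply: eq_bigr => x _.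
  rewrite !mulr_sumr; apply: eq_bigr => y _; rewrite !mulr_sumr; apply: eq_bigr => z _.
  by rewrite /gradsq /Dx /Dy /Dz !vdotZl !vdotZr meshhE invrK; ring.
by rewrite meshhE exprVn; field.
Qed.

Lemma sobolev_bound_norms N f : (0 < N)%N ->
  sobolev_bound N f = Num.sqrt N%:R * (norm2 N f + 8 * gnorm2 N f).
Proof.
move=> N0; have N0r : (N%:R : R) != 0 by rewrite pnatr_eq0 -lt0n.
rewrite /sobolev_bound isum_sqrf_norm2 // dirichlet_gnorm2 // !sqrtr_sqr.
by rewrite !ger0_norm ?mulr_ge0 ?sqrtr_ge0 ?ler0n //; field.
Qed.

Lemma sqr_vnorm_le_norms N f x y z : (0 < N)%N ->
  (1 <= x < N.+1)%N -> (1 <= y < N.+1)%N -> (1 <= z < N.+1)%N ->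
  vnorm (f x y z) ^+ 2 <= N%:R * (norm2 N f + 8 * gnorm2 N f) ^+ 2.
Proof.
move=> N0 hx hy hz; rewrite sqr_vnorm.
apply: le_trans (sqrf_le_sobolev_bound f N0 hx hy hz) _.
by rewrite sobolev_bound_norms // exprMn sqr_sqrtr ?ler0n.
Qed.

Lemma le_imax N (F : nat -> nat -> nat -> R) x y z :
  (1 <= x < N.+1)%N -> (1 <= y < N.+1)%N -> (1 <= z < N.+1)%N -> F x y z <= imax N F.
Proof.
move=> hx hy hz; rewrite /imax.
apply: le_trans (_ : \big[Num.max/0]_(1 <= c < N.+1) F x y c <= _).
  by apply: (le_bigmax_seq _ z); rewrite ?mem_index_iota.
apply: le_trans (_ : \big[Num.max/0]_(1 <= b < N.+1) \big[Num.max/0]_(1 <= c < N.+1)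
  F x b c <= _).
  by apply: (le_bigmax_seq _ y _ (fun b => \big[Num.max/0]_(1 <= c < N.+1) F x b c));
    rewrite ?mem_index_iota.
by apply: (le_bigmax_seq _ x _
  (fun a => \big[Num.max/0]_(1 <= b < N.+1) \big[Num.max/0]_(1 <= c < N.+1) F a b c));
  rewrite ?mem_index_iota.
Qed.

Lemma normr_gdot_le N f g (a b : R) : 0 <= a -> 0 <= b ->
  (forall x y z, (1 <= x < N.+1)%N -> (1 <= y < N.+1)%N -> (1 <= z < N.+1)%N ->
     `|vdot (f x y z) (g x y z)|
       <= a * vdot (g x y z) (g x y z) + b * vdot (f x y z) (f x y z)) ->
  `|gdot N f g| <= a * norm2 N g ^+ 2 + b * norm2 N f ^+ 2.
Proof.
move=> a0 b0 pt; have h3 : 0 <= meshh R N ^+ 3 by rewrite exprn_ge0 // invr_ge0 ler0n.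
rewrite !sqr_norm2 /gdot normrM ger0_norm // mulrCA (mulrCA b) -mulrDr.
apply: ler_wpM2l => //; rewrite /isum !mulr_sumr -big_split /=.
apply: le_trans (ler_norm_sum _ _ _) _; apply: ler_sum_nat => x hx.
rewrite !mulr_sumr -big_split /=.
apply: le_trans (ler_norm_sum _ _ _) _; apply: ler_sum_nat => y hy.
rewrite !mulr_sumr -big_split /=.
apply: le_trans (ler_norm_sum _ _ _) _; apply: ler_sum_nat => z hz.
exact: pt.
Qed.

End GridNorms.

Lemma powR_ratn8 (R : realType) (k : R) (n : nat) : 0 <= k ->
  k `^ (n%:R / 8) = (k `^ (1 / 8)) ^+ n.
Proof.
move=> k0; rewrite -powR_mulrn ?powR_ge0 // -powRrM; congr (_ `^ _).
by rewrite mul1r mulrC.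
Qed.

(* With [r = k^(1/8)] and [k <= C2 h], the [h^(-1/2)] loss in the Sobolev inequality
   still leaves a pointwise bound of order [k^(7/8)]. *)
Lemma vnorm_le_of_norm_bounds (R : realType) N (f : gridfun R) (r C2 : R) x y z :
  (0 < N)%N -> 0 <= r <= 1 -> N%:R * r ^+ 8 <= C2 ->
  (1 <= x < N.+1)%N -> (1 <= y < N.+1)%N -> (1 <= z < N.+1)%N ->
  norm2 N f <= 2 * r ^+ 15 -> gnorm2 N f <= 2^-1 * r ^+ 11 ->
  vnorm (f x y z) <= 6 * Num.sqrt C2 * r ^+ 7.
Proof.
move=> N0 /andP[r0 r1] NC hx hy hz f2 fg.
have C20 : 0 <= C2 by apply: le_trans _ NC; rewrite mulr_ge0 ?ler0n ?exprn_ge0.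
apply: ler_of_sqr; first by rewrite !mulr_ge0 ?sqrtr_ge0 ?exprn_ge0.
apply: le_trans (sqr_vnorm_le_norms f N0 hx hy hz) _.
have r15 : r ^+ 15 <= r ^+ 11 by rewrite ler_wiXn2l.
have norms_le : (norm2 N f + 8 * gnorm2 N f) ^+ 2 <= (6 * r ^+ 11) ^+ 2.
  have n0 : 0 <= norm2 N f := sqrtr_ge0 _.
  have g0 : 0 <= gnorm2 N f := sqrtr_ge0 _.
  have r11 : 0 <= r ^+ 11 := exprn_ge0 _ r0.
  by rewrite mulrC in fg; rewrite ler_pXn2r ?nnegrE //; lra.
apply: le_trans (ler_wpM2l (ler0n _ N) norms_le) _.
have -> : (6 * Num.sqrt C2 * r ^+ 7) ^+ 2 = 36 * r ^+ 14 * C2.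
  by rewrite !exprMn sqr_sqrtr //; ring.
have -> : N%:R * (6 * r ^+ 11) ^+ 2 = 36 * r ^+ 14 * (N%:R * r ^+ 8) by ring.
by rewrite ler_wpM2l // mulr_ge0 // exprn_ge0.
Qed.

Lemma defect_parameters (R : realFieldType) (c r : R) :
  0 <= c -> 0 < r -> (30 * c + 1) * r < 1 ->
  6 * c * r ^+ 7 < 1 /\ (5 * (6 * c * r ^+ 7) + r ^+ 7 / 4) ^+ 2 <= 4 * r ^+ 10 * r ^+ 2.
Proof.
move=> c0 r0 Kr; have r6 : 0 <= r ^+ 6 by rewrite exprn_ge0 // ltW.
have r7 : 0 <= r ^+ 7 by rewrite exprn_ge0 // ltW.
have cr : 0 <= c * r by rewrite mulr_ge0 // ltW.
have r61 : r ^+ 6 <= 1 by rewrite exprn_ile1 ?ltW //; lra.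
have Kr7 : (30 * c + 1) * r ^+ 7 <= r ^+ 6 by rewrite exprS mulrA ler_piMl // ltW.
have cr7 : 0 <= c * r ^+ 7 by rewrite mulr_ge0.
split; first by nra.
have -> : 4 * r ^+ 10 * r ^+ 2 = (2 * r ^+ 6) ^+ 2 by ring.
by rewrite ler_pXn2r ?nnegrE //; nra.
Qed.

(* The theorem in the variable [r = k^(1/8)]; [(30 sqrt C2 + 1) r < 1] is the smallness of [k]. *)
Section NormalizationDefect.
Variables (R : realType) (N : nat) (C2 r : R) (mu1 mu2 mt1 mt2 : gridfun R).
Hypotheses (N0 : (0 < N)%N) (r0 : 0 < r) (Kr : (30 * Num.sqrt C2 + 1) * r < 1).
Hypothesis NC : N%:R * r ^+ 8 <= C2.
Hypotheses (u1 : unit_length N mu1) (u2 : unit_length N mu2).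
Hypotheses (te1_2 : norm2 N (gsub mu1 mt1) <= 2 * r ^+ 15)
  (te2_2 : norm2 N (gsub mu2 mt2) <= 2 * r ^+ 15)
  (te1_g : gnorm2 N (gsub mu1 mt1) <= 2^-1 * r ^+ 11)
  (te2_g : gnorm2 N (gsub mu2 mt2) <= 2^-1 * r ^+ 11)
  (mu12 : normInf N (gsub mu1 mu2) <= 4^-1 * r ^+ 7).

Lemma normr_gdot_normalization_defect_le :
  let e1 := gsub mu1 (normalize mt1) in
  let e2 := gsub mu2 (normalize mt2) in
  let te1 := gsub mu1 mt1 in
  `|gdot N (gsub te1 e1) e2|
    <= r ^+ 10 * norm2 N e2 ^+ 2 + r ^+ 2 * norm2 N (gsub te1 e1) ^+ 2.
Proof.
have c0 : 0 <= Num.sqrt C2 := sqrtr_ge0 C2.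
have [d_lt1 d_le] := defect_parameters c0 r0 Kr.
have r01 : 0 <= r <= 1.
  rewrite ltW //=; apply: ltW (le_lt_trans _ Kr).
  by rewrite ler_pMl // lerDr mulr_ge0.
have r_ge0 n : 0 <= r ^+ n by rewrite exprn_ge0 // ltW.
have interior i : (1 <= i < N.+1)%N -> (i <= N.+1)%N by case/andP=> _ /ltnW.
move=> /=; apply: normr_gdot_le => // i j l hi hj hl.
rewrite /gsub opprB addrC subrKA.
apply: (vdot_normalization_defect_le (u := mu1 i j l) (d := 6 * Num.sqrt C2 * r ^+ 7)
  (delta := r ^+ 7 / 4)) => //.
- by apply: u1; apply: interior.
- by apply: u2; apply: interior.
- exact: vnorm_le_of_norm_bounds N0 r01 NC hi hj hl te1_2 te1_g.
- exact: vnorm_le_of_norm_bounds N0 r01 NC hi hj hl te2_2 te2_g.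
- apply: le_trans (le_imax (fun i j l => vnorm (gsub mu1 mu2 i j l)) hi hj hl) _.
  by rewrite mulrC.
Qed.

End NormalizationDefect.

Unset Implicit Arguments.

Theorem mainTheorem4 (R : realType) (Cs C1 C2 : R) :
  0 < Cs -> 0 < C1 -> 0 < C2 ->
  exists k0 : R, exists h0 : R, 0 < k0 /\ 0 < h0 /\
  forall (N : nat) (k : R) (mu1 mu2 mt1 mt2 : gridfun R),
    (0 < N)%N -> meshh R N < h0 -> k < k0 ->
    inX N mu1 -> inX N mu2 -> inX N mt1 -> inX N mt2 ->
    unit_length N mu1 -> unit_length N mu2 ->
    normInf N mu1 + gnormInf N mu1 <= Cs ->
    normInf N mu2 + gnormInf N mu2 <= Cs ->
    C1 * meshh R N <= k -> k <= C2 * meshh R N ->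
    norm2 N (gsub mu1 mt1) <= 2 * k `^ (15 / 8) ->
    norm2 N (gsub mu2 mt2) <= 2 * k `^ (15 / 8) ->
    gnorm2 N (gsub mu1 mt1) <= 2^-1 * k `^ (11 / 8) ->
    gnorm2 N (gsub mu2 mt2) <= 2^-1 * k `^ (11 / 8) ->
    normInf N (gsub mu1 mu2) <= 4^-1 * k `^ (7 / 8) ->
    let e1 := gsub mu1 (normalize mt1) in
    let e2 := gsub mu2 (normalize mt2) in
    let te1 := gsub mu1 mt1 in
    `| gdot N (gsub te1 e1) e2 |
      <= k `^ (5 / 4) * norm2 N e2 ^+ 2 + k `^ (1 / 4) * norm2 N (gsub te1 e1) ^+ 2.
Proof.
move=> _ C10 C20; set K := 30 * Num.sqrt C2 + 1.
have K1 : 1 <= K by rewrite lerDr mulr_ge0 ?sqrtr_ge0.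
have K0 : 0 < K by lra.
exists (K^-1 ^+ 8), 1; split; first by rewrite exprn_gt0 ?invr_gt0.
split=> // N k mu1 mu2 mt1 mt2 N0 _ k_lt _ _ _ _ u1 u2 _ _ k_ge k_le te1_2 te2_2 te1_g te2_g mu12.
have k0 : 0 < k by apply: lt_le_trans k_ge; rewrite mulr_gt0 // invr_gt0 ltr0n.
set r := k `^ (1 / 8).
have pow8 n : k `^ (n%:R / 8) = r ^+ n := powR_ratn8 n (ltW k0).
have ek : k = r ^+ 8 by rewrite -pow8 (_ : 8%:R / 8 = 1) ?powRr1 ?(ltW k0) //; lra.
rewrite (pow8 15%N) in te1_2 te2_2; rewrite (pow8 11%N) in te1_g te2_g.
rewrite (pow8 7%N) in mu12.
have -> : k `^ (5 / 4) = r ^+ 10 by rewrite -pow8; congr (_ `^ _); lra.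
have -> : k `^ (1 / 4) = r ^+ 2 by rewrite -pow8; congr (_ `^ _); lra.
apply: (normr_gdot_normalization_defect_le (C2 := C2)) => //; first exact: powR_gt0.
  have r_lt : r < K^-1.
    by move: k_lt; rewrite ek ltr_pXn2r ?nnegrE ?powR_ge0 ?invr_ge0 //; lra.
  by rewrite -[ltRHS](mulfV (lt0r_neq0 K0)) ltr_pM2l.
rewrite -ek; move: k_le; rewrite meshhE -(@ler_pM2l _ N%:R) ?ltr0n //.
by rewrite mulrCA mulfV ?mulr1 // pnatr_eq0 -lt0n.
Qed.
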